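(* Let $A=\mathbb{C}[x,y,z]$ and let $a,b,c,d\in A$ with $d\neq 0$. Then the triples $c\,\mathrm{grad}(a)$ and $d\,\mathrm{grad}(b)$ are compatible if and only if $\det \mathrm{Jac}(a,b,cd^{-1})=0$ (in $Q(A)$).
   Context: $\mathrm{grad}(a)=(a_x,a_y,a_z)$, subscripts being partial derivatives, and $\mathrm{Jac}(f,g,h)$ is the $3\times3$ matrix with rows $\mathrm{grad}(f),\mathrm{grad}(g),\mathrm{grad}(h)$. A triple $F=(f,g,h)$ is a Poisson triple if there is a Poisson bracket with $\{y,z\}=f$, $\{z,x\}=g$, $\{x,y\}=h$. Two Poisson triples $F,G$ are compatible if $\lambda F+\mu G$ is a Poisson triple for all $\lambda,\mu\in\mathbb{C}$. *)

From HB Require Import structures.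
From mathcomp Require Import all_boot all_order all_algebra.
From mathcomp Require Import fraction.
From mathcomp Require Import complex.
From mathcomp Require Import reals.
From mathcomp Require Import mpoly.
Set Implicit Arguments. Unset Strict Implicit. Unset Printing Implicit Defensive.
Import GRing.Theory Num.Theory.
Local Open Scope ring_scope.


(* C = complex R for R : realType (any realType is the reals, so this is C). A = C[x,y,z]; x = 'X_0, y = 'X_1, z = 'X_2. *)
Definition PolyA (R : realType) := {mpoly (complex R)[3]}.

Definition triple (R : realType) := (PolyA R * PolyA R * PolyA R)%type.

Definition d_x {R : realType} (a : PolyA R) : PolyA R := mderiv (0 : 'I_3) a.
Definition d_y {R : realType} (a : PolyA R) : PolyA R := mderiv (1 : 'I_3) a.
Definition d_z {R : realType} (a : PolyA R) : PolyA R := mderiv (2 : 'I_3) a.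

Definition grad {R : realType} (a : PolyA R) : triple R := (d_x a, d_y a, d_z a).

Definition tmul {R : realType} (c : PolyA R) (F : triple R) : triple R :=
  (c * F.1.1, c * F.1.2, c * F.2).
Definition tlin {R : realType} (l m : complex R) (F G : triple R) : triple R :=
  (l *: F.1.1 + m *: G.1.1, l *: F.1.2 + m *: G.1.2, l *: F.2 + m *: G.2).

Definition is_poisson_bracket {R : realType} (br : PolyA R -> PolyA R -> PolyA R) : Prop :=
  [/\ (forall (l : complex R) (p q r : PolyA R), br (l *: p + q) r = l *: br p r + br q r),
      (forall (l : complex R) (p q r : PolyA R), br r (l *: p + q) = l *: br r p + br r q),
      (forall p q : PolyA R, br p q = - br q p),
      (forall p q r : PolyA R, br p (q * r) = q * br p r + br p q * r) &
      (forall p q r : PolyA R, br p (br q r) + br q (br r p) + br r (br p q) = 0)].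

Definition X_ {R : realType} (i : 'I_3) : PolyA R := 'X_i.

Definition poisson_triple {R : realType} (F : triple R) : Prop :=
  exists br, is_poisson_bracket br /\
    br (X_ 1) (X_ 2) = F.1.1 /\ br (X_ 2) (X_ 0) = F.1.2 /\ br (X_ 0) (X_ 1) = F.2.

Definition compatible {R : realType} (F G : triple R) : Prop :=
  forall l m : complex R, poisson_triple (tlin l m F G).

Definition QA (R : realType) := {fraction PolyA R}.
Definition toQ {R : realType} (a : PolyA R) : QA R := tofrac a.

(* Partial derivative of c/d in Q(A) (unique extension of the derivation,
   given by the quotient rule): (c_i d - c d_i) / d^2 *)
Definition dfrac {R : realType} (i : 'I_3) (c d : PolyA R) : QA R :=
  toQ (mderiv i c * d - c * mderiv i d) / toQ (d ^+ 2).

Definition Jac_frac {R : realType} (a b c d : PolyA R) : 'M[QA R]_3 :=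
  \matrix_(i < 3, j < 3)
    (if i == 0 then toQ (mderiv j a)
     else if i == 1 then toQ (mderiv j b)
     else dfrac j c d).

(* A Poisson bracket on C[x,y,z] is a biderivation, hence determined by the
   triple F = ({y,z}, {z,x}, {x,y}) through {p,q} = F . (grad p x grad q).
   For this bracket the Jacobiator of p, q, r is -(F . curl F) det Jac(p,q,r),
   so F is a Poisson triple iff F . curl F = 0.  For F = l c grad a + m d grad b
   one computes F . curl F = l m (d det Jac(a,b,c) - c det Jac(a,b,d)), and by
   the quotient rule the last factor is d^2 det Jac(a,b,c/d). *)

From HB Require Import structures.
From mathcomp Require Import all_boot all_order all_algebra.
From mathcomp Require Import fraction complex reals mpoly.
From mathcomp Require Import ring.
Set Implicit Arguments. Unset Strict Implicit. Unset Printing Implicit Defensive.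
Import GRing.Theory Num.Theory.
Local Open Scope ring_scope.

Lemma det_mx33 (K : comNzRingType) (M : 'M[K]_3) :
  \det M = M 0 0 * (M 1 1 * M 2 2 - M 1 2 * M 2 1)
         - M 0 1 * (M 1 0 * M 2 2 - M 1 2 * M 2 0)
         + M 0 2 * (M 1 0 * M 2 1 - M 1 1 * M 2 0).
Proof.
rewrite (expand_det_row _ 0) !big_ord_recl big_ord0 /cofactor.
rewrite !(expand_det_row _ 0) !big_ord_recl !big_ord0 /cofactor !det_mx11 !mxE /=.
set N := fun a b : nat => M (inord a) (inord b).
have E i j : M i j = N (val i) (val j) by rewrite /N !inord_val.
rewrite !E /= /bump /= !addn0 !add0n; ring.
Qed.

Section CrossBracket.
Variables (S : comNzRingType) (T : comAlgType S) (D : 'I_3 -> T -> T).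
Hypothesis D_add : forall i, {morph D i : p q / p + q}.
Hypothesis D_scale : forall i (l : S) p, D i (l *: p) = l *: D i p.
Hypothesis D_mul : forall i p q, D i (p * q) = D i p * q + p * D i q.
Hypothesis D_comm : forall i j p, D j (D i p) = D i (D j p).

Lemma D_opp i p : D i (- p) = - D i p.
Proof. by rewrite -scaleN1r D_scale scaleN1r. Qed.

Definition cross_bracket (f g h p q : T) : T :=
  f * (D 1 p * D 2 q - D 2 p * D 1 q) + g * (D 2 p * D 0 q - D 0 p * D 2 q)
  + h * (D 0 p * D 1 q - D 1 p * D 0 q).

Definition jacobian3 (p q r : T) : T :=
  D 0 p * (D 1 q * D 2 r - D 2 q * D 1 r) - D 1 p * (D 0 q * D 2 r - D 2 q * D 0 r)
  + D 2 p * (D 0 q * D 1 r - D 1 q * D 0 r).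

Definition dot_curl (f g h : T) : T :=
  f * (D 1 h - D 2 g) + g * (D 2 f - D 0 h) + h * (D 0 g - D 1 f).

Lemma cross_bracketZDl f g h (l : S) p q r :
  cross_bracket f g h (l *: p + q) r = l *: cross_bracket f g h p r + cross_bracket f g h q r.
Proof.
pose L : T := l%:A; have scL (x : T) : l *: x = L * x by rewrite mulr_algl.
rewrite /cross_bracket !(D_add, D_scale) !scL; ring.
Qed.

Lemma cross_bracketZDr f g h (l : S) p q r :
  cross_bracket f g h r (l *: p + q) = l *: cross_bracket f g h r p + cross_bracket f g h r q.
Proof.
pose L : T := l%:A; have scL (x : T) : l *: x = L * x by rewrite mulr_algl.
rewrite /cross_bracket !(D_add, D_scale) !scL; ring.
Qed.

Lemma cross_bracketC f g h p q : cross_bracket f g h p q = - cross_bracket f g h q p.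
Proof. rewrite /cross_bracket; ring. Qed.

Lemma cross_bracketMr f g h p q r :
  cross_bracket f g h p (q * r) = q * cross_bracket f g h p r + cross_bracket f g h p q * r.
Proof. rewrite /cross_bracket !D_mul; ring. Qed.

Lemma cross_bracket_D i f g h p q : D i (cross_bracket f g h p q) =
  cross_bracket (D i f) (D i g) (D i h) p q + cross_bracket f g h (D i p) q
  + cross_bracket f g h p (D i q).
Proof. rewrite /cross_bracket !(D_add, D_opp, D_mul) !(D_comm i); ring. Qed.

Lemma cross_bracket_jacobi f g h p q r :
  let br := cross_bracket f g h in
  br p (br q r) + br q (br r p) + br r (br p q) = - dot_curl f g h * jacobian3 p q r.
Proof.
rewrite /= {1 3 5}/cross_bracket !cross_bracket_D /cross_bracket /dot_curl /jacobian3.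
rewrite !(D_comm 1 0) !(D_comm 2 0) !(D_comm 2 1); ring.
Qed.

Definition jacobian3_div_num (a b c d : T) : T := d * jacobian3 a b c - c * jacobian3 a b d.

Lemma dot_curl_pencil (l m : S) a b c d :
  dot_curl (l *: (c * D 0 a) + m *: (d * D 0 b)) (l *: (c * D 1 a) + m *: (d * D 1 b))
           (l *: (c * D 2 a) + m *: (d * D 2 b)) = (l * m) *: jacobian3_div_num a b c d.
Proof.
rewrite /dot_curl.
pose L : T := l%:A; have scL (x : T) : l *: x = L * x by rewrite mulr_algl.
pose M : T := m%:A; have scM (x : T) : m *: x = M * x by rewrite mulr_algl.
have -> : (l * m) *: jacobian3_div_num a b c d = L * M * jacobian3_div_num a b c d.
  by rewrite /L /M -mulrA !mulr_algl scalerA.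
rewrite /jacobian3_div_num /jacobian3 !(D_add, D_scale, D_mul).
rewrite !(D_comm 1 0) !(D_comm 2 0) !(D_comm 2 1) !scL !scM; ring.
Qed.
End CrossBracket.

Section Generators.
Variables (S : comNzRingType) (T : comAlgType S) (D : 'I_3 -> T -> T) (x : 'I_3 -> T).
Hypothesis D_gen : forall i j, D i (x j) = (i == j)%:R.

Lemma cross_bracket_gen f g h :
  let br := cross_bracket D f g h in
  [/\ br (x 1) (x 2) = f, br (x 2) (x 0) = g & br (x 0) (x 1) = h].
Proof. by split; rewrite /cross_bracket !D_gen /=; ring. Qed.

Lemma jacobian3_gen : jacobian3 D (x 0) (x 1) (x 2) = 1.
Proof. by rewrite /jacobian3 !D_gen /=; ring. Qed.
End Generators.

Lemma mderiv_mpolyX (n : nat) (K : comNzRingType) (i j : 'I_n) :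
  mderiv i ('X_j : {mpoly K[n]}) = (i == j)%:R.
Proof.
rewrite mderivX mnm1E eq_sym; case: eqVneq => [<-|_]; last by rewrite scale0r.
suff -> : (U_(i) - U_(i))%MM = 0%MM by rewrite mpolyX0 scale1r.
by apply/mnmP => k; rewrite mnmBE subnn mnm0E.
Qed.

Section DerivationExpansion.
Variables (n : nat) (K : comNzRingType) (delta : {mpoly K[n]} -> {mpoly K[n]}).
Hypothesis delta_linear : forall (l : K) p q, delta (l *: p + q) = l *: delta p + delta q.
Hypothesis delta_mul : forall p q, delta (p * q) = p * delta q + delta p * q.

Lemma derivation_mpolyE p : delta p = \sum_(i < n) mderiv i p * delta 'X_i.
Proof.
pose expands q := delta q = \sum_(i < n) mderiv i q * delta 'X_i.
have delta0 : delta 0 = 0.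
  have := delta_linear 1 0 0; rewrite scale1r addr0 scale1r -{1}[delta 0]addr0.
  by move=> /addrI/esym.
have expLin l q r : expands q -> expands r -> expands (l *: q + r).
  rewrite /expands delta_linear => -> ->; rewrite scaler_sumr -big_split.
  by apply: eq_bigr => i _; rewrite mderivD mderivZ scalerAl mulrDl.
have exp1 : expands 1.
  have : delta (1 * 1) = delta 1 + delta 1 by rewrite delta_mul mulr1 mul1r.
  rewrite /expands mulr1 -{1}[delta 1]addr0 => /addrI <-.
  by rewrite big1 // => i _; rewrite -mpolyC1 mderivC mul0r.
have expM q r : expands q -> expands r -> expands (q * r).
  rewrite /expands delta_mul => -> ->; rewrite big_distrr big_distrl -big_split.
  by apply: eq_bigr => i _; rewrite mderivM /=; ring.
have expX i : expands 'X_i.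
  rewrite /expands (bigD1 i) //= big1 ?addr0 => [|j ji].
    by rewrite mderiv_mpolyX eqxx mul1r.
  by rewrite mderiv_mpolyX (negbTE ji) mul0r.
have expXm m : expands 'X_[m].
  rewrite mpolyXE_id; apply: big_ind => // i _.
  by elim: (m i) => [|k IHk]; rewrite ?expr0 // exprS; apply: expM.
elim/mpolyind: p => [|c m p _ _]; last exact: expLin.
by rewrite /expands delta0 big1 // => i _; rewrite mderiv0 mul0r.
Qed.
End DerivationExpansion.

Lemma sum_ord3 (V : nmodType) (F : 'I_3 -> V) : \sum_(i < 3) F i = F 0 + F 1 + F 2.
Proof.
rewrite !big_ord_recl big_ord0 addr0 addrA.
have -> : lift ord0 (ord0 : 'I_2) = 1 by apply: val_inj.
by have -> : lift ord0 (lift ord0 (ord0 : 'I_1)) = 2 by apply: val_inj.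
Qed.

Section PoissonTriples.
Variable R : realType.
Local Notation A := (PolyA R).
Local Notation D := (@mderiv 3 (complex R)).
Let D_add := @mderivD 3 (complex R).
Let D_scale := @mderivZ 3 (complex R).
Let D_mul := @mderivM 3 (complex R).
Let D_comm := @mderiv_comm 3 (complex R).
Let D_gen := @mderiv_mpolyX 3 (complex R).

Lemma poisson_bracket_diag (br : A -> A -> A) p : is_poisson_bracket br -> br p p = 0.
Proof.
case=> _ _ skew _ _; have /eqP : (2%:R : complex R) *: br p p = 0.
  by rewrite scaler_nat mulr2n {1}skew addNr.
by rewrite scaler_eq0 pnatr_eq0 => /eqP.
Qed.

Lemma poisson_bracket_cross (br : A -> A -> A) p q : is_poisson_bracket br ->
  br p q = cross_bracket D (br (X_ 1) (X_ 2)) (br (X_ 2) (X_ 0)) (br (X_ 0) (X_ 1)) p q.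
Proof.
move=> Pbr; have [_ lin_r skew leib _] := Pbr.
have expand r s : br r s = \sum_(i < 3) D i s * br r 'X_i.
  exact: derivation_mpolyE (fun l p q => lin_r l p q r) (leib r) s.
rewrite [LHS]expand sum_ord3 !(skew p) ![br _ p]expand !sum_ord3.
rewrite !poisson_bracket_diag // (skew 'X_2 'X_1) (skew 'X_0 'X_2) (skew 'X_1 'X_0).
by rewrite /cross_bracket /X_; ring.
Qed.

Lemma cross_bracket_poisson f g h :
  dot_curl D f g h = 0 -> is_poisson_bracket (cross_bracket D f g h).
Proof.
move=> curl0; split.
- exact: cross_bracketZDl D_add D_scale f g h.
- exact: cross_bracketZDr D_add D_scale f g h.
- exact: cross_bracketC.
- exact: cross_bracketMr D_mul f g h.
- move=> p q r; rewrite (cross_bracket_jacobi D_add D_scale D_mul D_comm).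
  by rewrite curl0 oppr0 mul0r.
Qed.

Lemma poisson_tripleP (F : triple R) :
  poisson_triple F <-> dot_curl D F.1.1 F.1.2 F.2 = 0.
Proof.
split=> [[br [Pbr [brf [brg brh]]]] | curl0].
- have br_cross p q : br p q = cross_bracket D F.1.1 F.1.2 F.2 p q.
    by rewrite (poisson_bracket_cross _ _ Pbr) brf brg brh.
  have [_ _ _ _ /(_ (X_ 0) (X_ 1) (X_ 2))] := Pbr.
  rewrite !br_cross (cross_bracket_jacobi D_add D_scale D_mul D_comm).
  by rewrite (jacobian3_gen D_gen) mulr1 => /eqP; rewrite oppr_eq0 => /eqP.
- exists (cross_bracket D F.1.1 F.1.2 F.2); split; first exact: cross_bracket_poisson.
  by have [] := cross_bracket_gen D_gen F.1.1 F.1.2 F.2.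
Qed.

Lemma compatible_gradP (a b c d : A) :
  compatible (tmul c (grad a)) (tmul d (grad b)) <-> jacobian3_div_num D a b c d = 0.
Proof.
have pencil l m := dot_curl_pencil D_add D_scale D_mul D_comm l m a b c d.
split=> [/(_ 1 1)/poisson_tripleP | N0 l m]; first by rewrite pencil mulr1 scale1r.
by apply/poisson_tripleP; rewrite pencil N0 scaler0.
Qed.

Lemma det_Jac_frac (a b c d : A) :
  \det (Jac_frac a b c d) = toQ (jacobian3_div_num D a b c d) / toQ (d ^+ 2).
Proof.
rewrite det_mx33 !mxE /= /dfrac /jacobian3_div_num /jacobian3 /toQ.
(* [ring] is very slow unless the partial derivatives are abstracted first. *)
move: (tofrac (d ^+ 2))^-1 (D 0 a) (D 1 a) (D 2 a) (D 0 b) (D 1 b) (D 2 b)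
  (D 0 c) (D 1 c) (D 2 c) (D 0 d) (D 1 d) (D 2 d).
by move=> w a0 a1 a2 b0 b1 b2 c0 c1 c2 d0 d1 d2; ring.
Qed.
End PoissonTriples.

Theorem proposition1p21 (R : realType) (a b c d : PolyA R) :
  d != 0 ->
  (compatible (tmul c (grad a)) (tmul d (grad b)) <-> \det (Jac_frac a b c d) = 0).
Proof.
move=> d_neq0; rewrite compatible_gradP det_Jac_frac.
split=> [-> | /eqP]; first by rewrite /toQ rmorph0 mul0r.
by rewrite mulf_eq0 invr_eq0 /toQ !tofrac_eq0 expf_eq0 (negbTE d_neq0) andbF orbF => /eqP.
Qed.
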